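(* Assume $p(\cdot\mid z)$ is an additive energy distribution for all $z\in\mathcal{Z}^{\times}$, i.e. $p(x\mid z)=\frac{1}{\mathbb{Z}(z)}\exp(-\langle\sigma(z),E(x)\rangle)$ for some $E:\mathbb{R}^n\to\mathbb{R}^{md}$ with $\mathbb{Z}(z)=\int\exp(-\langle\sigma(z),E(x)\rangle)dx<\infty$ and support $\mathbb{R}^n$. Let $q(x,z)=q(z)q(x\mid z)$ be a test distribution with $q(x\mid z)=p(x\mid z)$ for all $z\in\mathcal{Z}^{\times}$, whose attribute support $\mathcal{Z}^{\mathsf{test}}$ satisfies $\mathcal{Z}^{\mathsf{test}}\subseteq\mathcal{Z}^{\times}$ and $\mathcal{Z}^{\mathsf{test}}\subseteq\mathsf{DAff}(\mathcal{Z}^{\mathsf{train}})$. Let $\hat E:\mathbb{R}^n\to\mathbb{R}^{md}$ and $\hat B:\mathcal{Z}^{\mathsf{train}}\to\mathbb{R}$ be such that the additive energy classifier $$\hat p(z\mid x)=\frac{\exp(-\langle\sigma(z),\hat E(x)\rangle+\log p(z)-\hat B(z))}{\sum_{z'\in\mathcal{Z}^{\mathsf{train}}}\exp(-\langle\sigma(z'),\hat E(x)\rangle+\log p(z')-\hat B(z'))},\quad z\in\mathcal{Z}^{\mathsf{train}},$$ satisfies $\hat p(z\mid x)=p(z\mid x)$ for all $z\in\mathcal{Z}^{\mathsf{train}}$ and all $x\in\mathbb{R}^n$. Define for $z\in\mathcal{Z}^{\times}$ the extrapolated bias $$B^\star(z)=\log\mathbb{E}_{x\sim p(x)}\Big[\frac{\exp(-\langle\sigma(z),\hat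 E(x)\rangle)}{\sum_{\tilde z\in\mathcal{Z}^{\mathsf{train}}}\exp(-\langle\sigma(\tilde z),\hat E(x)\rangle+\log p(\tilde z)-\hat B(\tilde z))}\Big],$$ where $p(x)$ is the training marginal of $x$. Let $\hat q$ be a probability distribution on attribute vectors with $\hat q(z)=q(z)$ for all $z\in\mathcal{Z}^{\mathsf{test}}$, and define for $z\in\mathcal{Z}^{\mathsf{test}}$ $$\hat q(z\mid x)=\frac{\exp(-\langle\sigma(z),\hat E(x)\rangle+\log\hat q(z)-B^\star(z))}{\sum_{z'\in\mathcal{Z}^{\mathsf{test}}}\exp(-\langle\sigma(z'),\hat E(x)\rangle+\log\hat q(z')-B^\star(z'))}.$$ Then $\hat q(z\mid x)=q(z\mid x)$ for all $z\in\mathcal{Z}^{\mathsf{test}}$ and all $x\in\mathbb{R}^n$.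
   Context: An attribute vector is $z=(z_1,\dots,z_m)$ with each $z_i\in\{1,\dots,d\}$; $\mathcal{Z}=\{1,\dots,d\}^m$. $\sigma(z)\in\{0,1\}^{md}$ is the concatenation of the one-hot encodings of $z_1,\dots,z_m$. For $\mathcal{A}=\{z^{(1)},\dots,z^{(k)}\}\subseteq\mathcal{Z}$, $\mathsf{DAff}(\mathcal{A})=\{z\in\mathcal{Z}:\exists\alpha\in\mathbb{R}^k,\ \sum_i\alpha_i=1,\ \sigma(z)=\sum_i\alpha_i\sigma(z^{(i)})\}$. The training distribution is $p(x,z)=p(z)p(x\mid z)$ on $\mathbb{R}^n\times\mathcal{Z}$, $\mathcal{Z}^{\mathsf{train}}$ is the support of $p(z)$, $\mathcal{Z}_i^{\mathsf{train}}$ the set of values of the $i$-th coordinate on $\mathcal{Z}^{\mathsf{train}}$, and $\mathcal{Z}^{\times}=\mathcal{Z}_1^{\mathsf{train}}\times\cdots\times\mathcal{Z}_m^{\mathsf{train}}$. $p(z\mid x)$ and $q(z\mid x)$ denote the posteriors of attributes given $x$ under $p$ and $q$. *)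

From HB Require Import structures.
From mathcomp Require Import all_boot all_order all_algebra.
From mathcomp Require Import all_classical all_reals all_analysis.
Set Implicit Arguments. Unset Strict Implicit. Unset Printing Implicit Defensive.
Import Order.TTheory GRing.Theory Num.Theory.
Local Open Scope ring_scope.

(* Attribute vectors z = (z_1,...,z_m), z_i in {1..d} (encoded as 'I_d). *)
Notation attr m d := {ffun 'I_m -> 'I_d}.

(* sigma(z) in {0,1}^(m d): concatenation of the one-hot encodings of the z_i
   (mxvec of the m x d matrix whose i-th row is the one-hot encoding of z_i). *)
Definition sigma (R : realType) (m d : nat) (z : attr m d) : 'rV[R]_(m * d) :=
  mxvec (\matrix_(i < m, j < d) ((z i == j)%:R : R)).

Definition dotv (R : realType) (k : nat) (u v : 'rV[R]_k) : R :=
  \sum_(l < k) u 0 l * v 0 l.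

Definition is_distr (R : realType) (T : finType) (p : T -> R) : Prop :=
  (forall t, 0 <= p t) /\ \sum_(t : T) p t = 1.

Definition supp (R : realType) (T : finType) (p : T -> R) : {set T} :=
  [set t | 0 < p t].

(* Z^x = Z_1^train x ... x Z_m^train for a training prior pz. *)
Definition Zcross (R : realType) (m d : nat) (pz : attr m d -> R) : {set attr m d} :=
  [set z : attr m d | [forall i : 'I_m, z i \in [set w i | w : attr m d in supp pz]]].

Definition DAff (R : realType) (m d : nat) (A : {set attr m d}) (z : attr m d) : Prop :=
  exists alpha : attr m d -> R,
    \sum_(w in A) alpha w = 1 /\ sigma R z = \sum_(w in A) alpha w *: sigma R w.

Section Dens.
Context (R : realType) (dX : measure_display) (X : measurableType dX)
        (mu : {measure set X -> \bar R}) (m d : nat).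

Definition Zpart (E : X -> 'rV[R]_(m * d)) (z : attr m d) : R :=
  Rintegral mu setT (fun x => expR (- dotv (sigma R z) (E x))).

Definition energy_dens (E : X -> 'rV[R]_(m * d)) (z : attr m d) (x : X) : R :=
  expR (- dotv (sigma R z) (E x)) / Zpart E z.

Definition marg (pz : attr m d -> R) (dens : attr m d -> X -> R) (x : X) : R :=
  \sum_(z in supp pz) pz z * dens z x.

Definition post (pz : attr m d -> R) (dens : attr m d -> X -> R)
    (z : attr m d) (x : X) : R :=
  pz z * dens z x / marg pz dens x.

Definition aclf (w : attr m d -> R) (A : {set attr m d})
    (Eh : X -> 'rV[R]_(m * d)) (B : attr m d -> R) (z : attr m d) (x : X) : R :=
  expR (- dotv (sigma R z) (Eh x) + ln (w z) - B z) /
  \sum_(z' in A) expR (- dotv (sigma R z') (Eh x) + ln (w z') - B z').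

Definition Bstar (pz : attr m d -> R) (dens : attr m d -> X -> R)
    (Eh : X -> 'rV[R]_(m * d)) (Bh : attr m d -> R) (z : attr m d) : R :=
  ln (Rintegral mu setT (fun x => marg pz dens x *
        (expR (- dotv (sigma R z) (Eh x)) /
         \sum_(z' in supp pz) expR (- dotv (sigma R z') (Eh x) + ln (pz z') - Bh z')))).

End Dens.

(* Matching the training posterior pins down the learned energy on every
   training attribute w up to an affine correction:
   <sigma(w), Eh(x)> = <sigma(w), E(x)> - c(w) - g(x), where c(w) = Bh(w) - log Z(w)
   and g(x) is the log-ratio of the classifier's normaliser to p(x), independent
   of w.  For z in DAff, sigma(z) is an affine combination of the sigma(w), so
   the same identity holds at z with c(z) the corresponding combination of the
   c(w).  Integrating it against p(x) gives B*(z) = c(z) + log Z(z); hence every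
   numerator of the test classifier equals exp(g(x)) q(z) p(x|z), and the common
   factor exp(g(x)) cancels in the normalisation. *)

From HB Require Import structures.
From mathcomp Require Import all_boot all_order all_algebra.
From mathcomp Require Import all_classical all_reals all_analysis.
From mathcomp Require Import ring.

Set Implicit Arguments.
Unset Strict Implicit.
Unset Printing Implicit Defensive.
Import Order.TTheory GRing.Theory Num.Theory.
Local Open Scope ring_scope.

Lemma is_distr_supp (R : realType) (T : finType) (p : T -> R) :
  is_distr p -> exists t, t \in supp p.
Proof.
case=> p_ge0 p_sum1; apply/existsP; apply: contraT.
rewrite negb_exists => /forallP p_le0.
suff : \sum_t p t = 0 by rewrite p_sum1 => /eqP; rewrite oner_eq0.
apply: big1 => t _; apply/eqP; rewrite eq_le p_ge0 andbT leNgt.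
by have := p_le0 t; rewrite inE.
Qed.

Lemma sum_expR_gt0 (R : realType) (T : finType) (A : {set T}) (F : T -> R)
    (t : T) :
  t \in A -> 0 < \sum_(u in A) expR (F u).
Proof.
move=> t_A; rewrite (bigD1 t) //=.
by rewrite ltr_wpDr ?expR_gt0 // sumr_ge0 // => u _; exact/ltW/expR_gt0.
Qed.

Lemma dotv_sumZl (R : realType) (k : nat) (T : finType) (A : {set T})
    (a : T -> R) (s : T -> 'rV[R]_k) (v : 'rV[R]_k) :
  dotv (\sum_(w in A) a w *: s w) v = \sum_(w in A) a w * dotv (s w) v.
Proof.
rewrite /dotv; under eq_bigr => l _ do rewrite summxE mulr_suml.
rewrite exchange_big /=; apply: eq_bigr => w _.
by rewrite mulr_sumr; apply: eq_bigr => l _; rewrite mxE mulrA.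
Qed.

Lemma dotv_affine_shift (R : realType) (k : nat) (T : finType) (A : {set T})
    (a c : T -> R) (s : T -> 'rV[R]_k) (u v : 'rV[R]_k) (b : R) :
  \sum_(w in A) a w = 1 ->
  (forall w, w \in A -> dotv (s w) u = dotv (s w) v - c w - b) ->
  dotv (\sum_(w in A) a w *: s w) u
  = dotv (\sum_(w in A) a w *: s w) v - \sum_(w in A) a w * c w - b.
Proof.
move=> a_sum1 shift; rewrite !dotv_sumZl -[b]mul1r -a_sum1 mulr_suml -!sumrB.
by apply: eq_bigr => w w_A; rewrite shift //; ring.
Qed.

Lemma classifier_match_energy (R : realType) (u v p B S Z M : R) :
  0 < p -> 0 < S -> 0 <= Z -> 0 <= M ->
  expR (- u + ln p - B) / S = p * (expR (- v) / Z) / M ->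
  [/\ 0 < Z, 0 < M & u = v - (B - ln Z) - (ln S - ln M)].
Proof.
move=> p_gt0 S_gt0 Z_ge0 M_ge0 eq_post.
have : p * (expR (- v) / Z) / M != 0.
  by rewrite -eq_post gt_eqF // divr_gt0 ?expR_gt0.
rewrite !mulf_eq0 !invr_eq0 => /norP[/norP[_ /norP[_ Z_neq0]] M_neq0].
have Z_gt0 : 0 < Z by rewrite lt0r Z_neq0.
have M_gt0 : 0 < M by rewrite lt0r M_neq0.
split => //; apply: oppr_inj; apply: expR_inj.
rewrite (_ : - (v - _ - _) = - v + B + (- ln Z + (ln S - ln M))); last by ring.
move: eq_post; rewrite !expRD (expRN (ln Z)) (expRN (ln M)) (expRN B) !lnK ?posrE //.
move: (expR (- u)) (expR (- v)) (expR B) (expR_gt0 B) => a b e e_gt0 eq_post.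
have -> : a = a * p / e / S * (S * e / p) by field; rewrite !gt_eqF.
by rewrite eq_post; field; rewrite !gt_eqF.
Qed.

Section PositiveIntegrand.
Variables (R : realType) (dX : measure_display) (X : measurableType dX).
Variable mu : {measure set X -> \bar R}.

Lemma Rintegral_measureT0 (g : X -> R) :
  mu setT = 0%E -> mu.-integrable setT (EFin \o g) -> Rintegral mu setT g = 0.
Proof.
move=> muT0 intg.
by rewrite /Rintegral (negligible_integral _ _ intg muT0) // setDv integral_set0.
Qed.

Lemma Rintegral_gt0 (f : X -> R) :
  (forall x, 0 < f x) -> mu.-integrable setT (EFin \o f) ->
  mu setT != 0%E -> 0 < Rintegral mu setT f.
Proof.
move=> f_gt0 intf muT_neq0.
rewrite lt0r Rintegral_ge0 ?andbT; last by move=> x _; exact: ltW.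
apply: contra_neq muT_neq0 => intf0.
have int_absf0 : (\int[mu]_x `|(f x)%:E| = 0)%E.
  rewrite -[RHS](congr1 EFin intf0) /Rintegral fineK; last exact: integrable_fin_num.
  by apply: eq_integral => x _; rewrite gee0_abs // lee_fin ltW.
have [N [mN muN0 f_neq0_N]] :=
  (ae_eq_integral_abs mu measurableT (measurable_int _ intf)).1 int_absf0.
apply: (subset_measure0 _ _ _ muN0) => // x _; apply: f_neq0_N => /(_ I) /eqP.
by rewrite eqe gt_eqF.
Qed.

End PositiveIntegrand.

Lemma Zpart_ge0 (R : realType) (dX : measure_display) (X : measurableType dX)
    (mu : {measure set X -> \bar R}) (m d : nat) (E : X -> 'rV[R]_(m * d)) z :
  0 <= Zpart mu E z.
Proof. by apply: Rintegral_ge0 => x _; exact/ltW/expR_gt0. Qed.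

Lemma marg_energy_ge0 (R : realType) (dX : measure_display) (X : measurableType dX)
    (mu : {measure set X -> \bar R}) (m d : nat) (pz : attr m d -> R)
    (E : X -> 'rV[R]_(m * d)) x :
  0 <= marg pz (energy_dens mu E) x.
Proof.
apply: sumr_ge0 => z; rewrite inE => /ltW pz_ge0.
by rewrite mulr_ge0 // divr_ge0 ?Zpart_ge0 //; exact/ltW/expR_gt0.
Qed.

Section ExtrapolatedBias.
Variables (R : realType) (dX : measure_display) (X : measurableType dX).
Variables (mu : {measure set X -> \bar R}) (m d : nat).
Variables (pz : attr m d -> R) (E Eh : X -> 'rV[R]_(m * d)) (Bh : attr m d -> R).

Hypothesis pz_distr : is_distr pz.
Hypothesis E_integrable : forall z, z \in Zcross pz ->
  mu.-integrable setT (fun x => (expR (- dotv (sigma R z) (E x)))%:E).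
Hypothesis fit : forall z x, z \in supp pz ->
  aclf pz (supp pz) Eh Bh z x = post pz (energy_dens mu E) z x.

Local Notation Z := (Zpart mu E).
Local Notation M := (marg pz (energy_dens mu E)).
Let S x := \sum_(w in supp pz) expR (- dotv (sigma R w) (Eh x) + ln (pz w) - Bh w).
Let g x := ln (S x) - ln (M x).

Let S_gt0 x : 0 < S x.
Proof. by have [w w_supp] := is_distr_supp pz_distr; exact: sum_expR_gt0 _ w_supp. Qed.

Lemma fit_energy_shift w x : w \in supp pz ->
  [/\ 0 < Z w, 0 < M x &
      dotv (sigma R w) (Eh x) = dotv (sigma R w) (E x) - (Bh w - ln (Z w)) - g x].
Proof.
move=> w_supp; apply: classifier_match_energy (fit x w_supp).
- by move: w_supp; rewrite inE.
- exact: S_gt0.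
- exact: Zpart_ge0.
- exact: marg_energy_ge0.
Qed.

Lemma marg_energy_gt0 x : 0 < M x.
Proof. by have [w /(fit_energy_shift x)[]] := is_distr_supp pz_distr. Qed.

(* [x] only witnesses that [X] is inhabited. *)
Lemma Zpart_gt0 (x : X) z : z \in Zcross pz -> 0 < Z z.
Proof.
move=> z_cross; have [w w_supp] := is_distr_supp pz_distr.
have [Zw_gt0 _ _] := fit_energy_shift x w_supp.
apply: Rintegral_gt0 => [y | |]; [exact: expR_gt0 | exact: E_integrable |].
apply: contraTneq Zw_gt0 => muT0; rewrite /Zpart Rintegral_measureT0 ?ltxx //.
by apply: E_integrable; rewrite inE; apply/forallP => i; apply/imsetP; exists w.
Qed.

Lemma DAff_energy_shift z : DAff R (supp pz) z ->
  exists C, forall x, dotv (sigma R z) (Eh x) = dotv (sigma R z) (E x) - C - g x.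
Proof.
case=> alpha [alpha_sum1 ->].
exists (\sum_(w in supp pz) alpha w * (Bh w - ln (Z w))) => x.
apply: dotv_affine_shift alpha_sum1 _ => w w_supp.
by case: (fit_energy_shift x w_supp).
Qed.

Lemma aclf_numer_Bstar z x (q : R) :
  z \in Zcross pz -> DAff R (supp pz) z -> 0 < q ->
  expR (- dotv (sigma R z) (Eh x) + ln q - Bstar mu pz (energy_dens mu E) Eh Bh z)
  = expR (g x) * (q * energy_dens mu E z x).
Proof.
move=> z_cross z_DAff q_gt0; have [C shift] := DAff_energy_shift z_DAff.
have Bstar_z : Bstar mu pz (energy_dens mu E) Eh Bh z = C + ln (Z z).
  rewrite /Bstar (@eq_Rintegral _ _ _ mu setT
    (fun y => expR C * expR (- dotv (sigma R z) (E y)))); last first.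
    move=> y _; rewrite shift (_ : - (_ - C - g y) =
      - dotv (sigma R z) (E y) + C + (ln (S y) - ln (M y))); last by rewrite /g; ring.
    rewrite !expRD (expRN (ln (M y))) !lnK ?posrE ?S_gt0 ?marg_energy_gt0 //.
    by rewrite -/(S y); field; rewrite !gt_eqF ?S_gt0 ?marg_energy_gt0.
  rewrite (RintegralZl (f := fun y => expR (- dotv (sigma R z) (E y))))
    ?E_integrable //.
  by rewrite lnM ?posrE ?expR_gt0 ?(Zpart_gt0 x) // expRK.
rewrite Bstar_z shift (_ : _ + ln q - _ =
  g x + (ln q + (- dotv (sigma R z) (E x) - ln (Z z)))); last by ring.
by rewrite !expRD (expRN (ln (Z z))) !lnK ?posrE ?(Zpart_gt0 x).
Qed.

Lemma aclf_Bstar (w : attr m d -> R) (A : {set attr m d}) z x :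
  {subset A <= Zcross pz} -> (forall z, z \in A -> DAff R (supp pz) z) ->
  (forall z, z \in A -> 0 < w z) -> z \in A ->
  aclf w A Eh (Bstar mu pz (energy_dens mu E) Eh Bh) z x
  = w z * energy_dens mu E z x / \sum_(z' in A) w z' * energy_dens mu E z' x.
Proof.
move=> A_cross A_DAff w_gt0 z_A.
have numer z' (z'_A : z' \in A) :=
  aclf_numer_Bstar x (A_cross _ z'_A) (A_DAff _ z'_A) (w_gt0 _ z'_A).
rewrite /aclf [X in X / _](numer z z_A).
under eq_bigr => z' z'_A do rewrite (numer z' z'_A).
by rewrite -mulr_sumr -mulf_div divff ?mul1r // gt_eqF ?expR_gt0.
Qed.

End ExtrapolatedBias.

Theorem theorem2 (R : realType) (dX : measure_display) (X : measurableType dX)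
  (mu : {measure set X -> \bar R}) (m d : nat)
  (pz : attr m d -> R) (E : X -> 'rV[R]_(m * d))
  (qz : attr m d -> R) (qdens : attr m d -> X -> R)
  (Eh : X -> 'rV[R]_(m * d)) (Bh : attr m d -> R) (qh : attr m d -> R) :
  is_distr pz ->
  (forall l, measurable_fun setT (fun x => E x 0 l)) ->
  (forall z, z \in Zcross pz ->
     mu.-integrable setT (fun x => (expR (- dotv (sigma R z) (E x)))%:E)) ->
  is_distr qz ->
  (forall z, z \in Zcross pz -> qdens z = energy_dens mu E z) ->
  supp qz \subset Zcross pz ->
  (forall z, z \in supp qz -> DAff R (supp pz) z) ->
  (forall z x, z \in supp pz ->
     aclf pz (supp pz) Eh Bh z x = post pz (energy_dens mu E) z x) ->
  is_distr qh ->
  (forall z, z \in supp qz -> qh z = qz z) ->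
  forall z x, z \in supp qz ->
    aclf qh (supp qz) Eh (Bstar mu pz (energy_dens mu E) Eh Bh) z x
    = post qz qdens z x.
Proof.
move=> pz_distr _ E_int _ qdens_E /fintype.subsetP qz_cross qz_DAff fit _ qh_qz.
move=> z x z_qz.
have qh_gt0 z' : z' \in supp qz -> 0 < qh z'.
  by move=> z'_qz; rewrite qh_qz //; rewrite inE in z'_qz.
rewrite (aclf_Bstar pz_distr E_int fit) // /post /marg.
have qdens_qz z' : z' \in supp qz -> qdens z' x = energy_dens mu E z' x.
  by move=> z'_qz; rewrite qdens_E // qz_cross.
rewrite qh_qz // qdens_qz //; congr (_ / _); apply: eq_bigr => z' z'_qz.
by rewrite qh_qz // qdens_qz.
Qed.
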